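(* Let $(Y,\preceq,\to)$ be an ordered vector space and $K=\{x\in Y: x\succeq0\}$ its positive cone. If $\prec$ is a strict vector ordering on $Y$, then $K$ is a solid cone with interior $K^\circ=\{x\in Y: x\succ 0\}$. Conversely, if $K$ is a solid cone with interior $K^\circ$, then the relation defined by $x\prec y$ iff $y-x\in K^\circ$ is the unique strict vector ordering on $Y$.
   Context: Vector space with convergence: a real vector space $Y$ with a relation $\to$ between sequences in $Y$ and points of $Y$ (uniqueness of limits not assumed) such that (C1) $x_n\to x$, $y_n\to y$ imply $x_n+y_n\to x+y$; (C2) $x_n\to x$, $\lambda\in\mathbb R$ imply $\lambda x_n\to\lambda x$; (C3) $\lambda_n\to\lambda$ in $\mathbb R$, $x\in Y$ imply $\lambda_n x\to\lambda x$. $A\subseteq Y$ is open if $x_n\to x\in A$ implies $x_n\in A$ for all but finitely many $n$; closed if $x_n\to x$, $x_n\in A$ for all $n$ imply $x\in A$. $A^\circ$ is the union of all open subsets of $A$. A cone is a nonempty closed $K$ with $\lambda K\subseteq K$ ($\lambda\ge 0$), $K+K\subseteq K$, $K\cap(-K)=\{0\}$; solid if $K\ne\{0\}$ and $K^\circ\neq\emptyset$. A vector ordering is a partial order $\preceq$ with (V1) $x\preceq y\Rightarrow x+z\preceq y+z$; (V2) $\lambda\ge0$, $x\preceq y\Rightarrow\lambda x\preceq\lambda y$; (V3) $x_n\to x$, $y_n\to y$, $x_n\preceq y_n$ $\forall n\Rightarrow x\preceq y$; $(Y,\preceq,\to)$ is then an ordered vector space. A strict ordering is a nonempty irreflexive,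 asymmetric, transitive relation. A strict vector ordering on an ordered vector space is a strict ordering $\prec$ such that (S1) $x\prec y\Rightarrow x\preceq y$; (S2) $x\preceq y$, $y\prec z\Rightarrow x\prec z$; (S3) $x\prec y\Rightarrow x+z\prec y+z$; (S4) $\lambda>0$, $x\prec y\Rightarrow\lambda x\prec\lambda y$; (S5) if $x_n\to x$, $y_n\to y$ and $x\prec y$, then $x_n\prec y_n$ for all but finitely many $n$. $x\succ y$ means $y\prec x$. *)

From HB Require Import structures.
From mathcomp Require Import all_boot all_order all_algebra.
From mathcomp Require Import all_classical all_reals all_analysis.
Set Implicit Arguments. Unset Strict Implicit. Unset Printing Implicit Defensive.
Import Order.TTheory GRing.Theory Num.Theory numFieldNormedType.Exports.
Local Open Scope classical_set_scope.
Local Open Scope ring_scope.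

Section VSConv.
Variables (R : realType) (Y : lmodType R).
Variable conv : (nat -> Y) -> Y -> Prop.

Definition is_convergence : Prop :=
  [/\ forall (x y : nat -> Y) (a b : Y),
        conv x a -> conv y b -> conv (fun n => x n + y n) (a + b),
      forall (x : nat -> Y) (a : Y) (l : R),
        conv x a -> conv (fun n => l *: x n) (l *: a) &
      forall (lam : nat -> R) (l : R) (a : Y),
        lam n @[n --> \oo] --> l -> conv (fun n => lam n *: a) (l *: a)].

Definition conv_open (A : set Y) : Prop :=
  forall (x : nat -> Y) (a : Y), conv x a -> A a ->
    exists N : nat, forall n, (N <= n)%N -> A (x n).

Definition conv_closed (A : set Y) : Prop :=
  forall (x : nat -> Y) (a : Y), conv x a -> (forall n, A (x n)) -> A a.

Definition conv_interior (A : set Y) : set Y :=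
  fun a => exists U : set Y, [/\ conv_open U, U `<=` A & U a].

Definition is_cone (K : set Y) : Prop :=
  [/\ K !=set0, conv_closed K,
      forall (l : R) (x : Y), 0 <= l -> K x -> K (l *: x),
      forall x y : Y, K x -> K y -> K (x + y) &
      K `&` [set x | K (- x)] = [set 0]].

Definition is_solid_cone (K : set Y) : Prop :=
  [/\ is_cone K, K <> [set 0] & conv_interior K !=set0].

Definition is_vector_ordering (le : Y -> Y -> Prop) : Prop :=
  (forall x, le x x)
      /\ (forall x y, le x y -> le y x -> x = y)
      /\ (forall x y z, le x y -> le y z -> le x z)
      /\ (forall x y z, le x y -> le (x + z) (y + z))
      /\ (forall (l : R) x y, 0 <= l -> le x y -> le (l *: x) (l *: y))
      /\ (forall (x y : nat -> Y) a b, conv x a -> conv y b ->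
                  (forall n, le (x n) (y n)) -> le a b).

Definition is_strict_ordering (lt : Y -> Y -> Prop) : Prop :=
  [/\ (exists x y, lt x y),
      (forall x, ~ lt x x),
      (forall x y, lt x y -> ~ lt y x) &
      (forall x y z, lt x y -> lt y z -> lt x z)].

Definition is_strict_vector_ordering (le lt : Y -> Y -> Prop) : Prop :=
  is_strict_ordering lt
      /\ (forall x y, lt x y -> le x y)
      /\ (forall x y z, le x y -> lt y z -> lt x z)
      /\ (forall x y z, lt x y -> lt (x + z) (y + z))
      /\ (forall (l : R) x y, 0 < l -> lt x y -> lt (l *: x) (l *: y))
      /\ (forall (x y : nat -> Y) a b, conv x a -> conv y b -> lt a b ->
                  exists N : nat, forall n, (N <= n)%N -> lt (x n) (y n)).

End VSConv.

(* Given a strict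
   vector ordering, (S5) applied to the constant sequence 0 shows that
   {x | x ≻ 0} is open, hence contained in the interior of K; conversely if
   x lies in an open U ⊆ K, then x - e/n lies in K for large n (by (C1)–(C3))
   for any e ≻ 0, and x = (x - e/n) + e/n ≻ 0 by (S2)–(S4). So K° = {x ≻ 0},
   which is nonempty, and K ≠ {0} by irreflexivity. For the converse the
   interior of a cone is stable under adding elements of K and under positive
   scaling, and avoids 0 when K ≠ {0}; this makes x ≺ y :⇔ y - x ∈ K° a
   strict vector ordering, and uniqueness is the description of K° above. *)
From HB Require Import structures.
From mathcomp Require Import all_boot all_order all_algebra.
From mathcomp Require Import all_classical all_reals all_analysis.
Import Order.TTheory GRing.Theory Num.Theory numFieldNormedType.Exports.
Local Open Scope classical_set_scope.
Local Open Scope ring_scope.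
Set Implicit Arguments.

Section ConvergenceVectorSpace.
Variables (R : realType) (Y : lmodType R) (conv : (nat -> Y) -> Y -> Prop).
Hypothesis convY : is_convergence conv.

Lemma conv_cst (a : Y) : conv (fun=> a) a.
Proof.
case: convY => _ _ C3.
have /(C3 _ _ a) : (fun=> 1 : R) @ \oo --> (1 : R) by exact: cvg_cst.
by rewrite scale1r.
Qed.

Lemma conv_subr_harmonic (x e : Y) : conv (fun n => x - n.+1%:R^-1 *: e) x.
Proof.
case: convY => C1 C2 C3.
have := C1 _ _ _ _ (conv_cst x) (C2 _ _ (-1) (C3 _ _ e (@cvg_harmonic R))).
rewrite scale0r scaler0 addr0.
by under eq_fun do rewrite scaleN1r.
Qed.

Lemma conv_open_eventually_subr (x e : Y) (U : set Y) : conv_open conv U ->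
  U x -> exists2 t : R, 0 < t & U (x - t *: e).
Proof.
move=> oU Ux; have [N UN] := oU _ _ (conv_subr_harmonic x e) Ux.
by exists N.+1%:R^-1; [rewrite invr_gt0 | exact: UN].
Qed.

Lemma conv_interior_sub (A : set Y) : conv_interior conv A `<=` A.
Proof. by move=> x [U [_ UA Ux]]; exact: UA. Qed.

Section ConeInterior.
Variable K : set Y.
Hypothesis coneK : is_cone conv K.
Let I := conv_interior conv K.

Lemma cone_interiorD x k : I x -> K k -> I (x + k).
Proof.
case: convY => C1 _ _; case: coneK => _ _ _ KD _.
move=> [U [oU UK Ux]] Kk; exists [set y | U (y - k)]; split => /=.
- by move=> xs a xsa Uak; exact: oU _ _ (C1 _ _ _ _ xsa (conv_cst (- k))) Uak.
- by move=> y /UK Ky; rewrite -(subrK k y); exact: KD.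
- by rewrite addrK.
Qed.

Lemma cone_interiorZ (l : R) x : 0 < l -> I x -> I (l *: x).
Proof.
case: convY => _ C2 _; case: coneK => _ _ KZ _ _.
move=> l_gt0 [U [oU UK Ux]]; have l_neq0 : l != 0 by rewrite gt_eqF.
exists [set y | U (l^-1 *: y)]; split => /=.
- by move=> xs a xsa; exact: oU _ _ (C2 _ _ l^-1 xsa).
- move=> y /UK Ky; have := KZ _ _ (ltW l_gt0) Ky.
  by rewrite scalerA mulfV // scale1r.
- by rewrite scalerA mulVf // scale1r.
Qed.

Lemma cone_interior_neq0 : K <> [set 0] -> ~ I 0.
Proof.
case: coneK => _ _ KZ _ Kanti.
move=> K_neq0 [U [oU UK U0]].
have [k Kk k_neq0] : exists2 k, K k & k != 0.
  apply: contrapT => noK; apply: K_neq0; apply/seteqP; split=> x /=.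
    by move=> Kx; apply: contrapT => /eqP x_neq0; apply: noK; exists x.
  case: coneK => -[y Ky] _ _ _ _ ->.
  by rewrite -(scale0r y); exact: KZ.
have [t t_gt0 Utk] := conv_open_eventually_subr 0 k oU U0.
have : (K `&` [set x | K (- x)]) (t *: k).
  by split=> /=; [exact: KZ (ltW t_gt0) Kk | rewrite -sub0r; exact: UK].
rewrite Kanti => /eqP; rewrite scaler_eq0 (gt_eqF t_gt0) /=.
exact/negP.
Qed.

End ConeInterior.

Section OrderedVectorSpace.
Variable le : Y -> Y -> Prop.
Hypothesis ordY : is_vector_ordering conv le.
Let K := [set x : Y | le 0 x].

Lemma le_subr_ge0 x y : le x y <-> le 0 (y - x).
Proof.
case: ordY => _ [_ [_ [V1 _]]]; split=> [/(V1 _ _ (- x)) | /(V1 _ _ x)].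
  by rewrite subrr.
by rewrite add0r subrK.
Qed.

Lemma positive_cone_is_cone : is_cone conv K.
Proof.
case: ordY => refl [anti [trans [V1 [V2 V3]]]]; split.
- by exists 0; exact: refl.
- by move=> xs a xsa Kxs; exact: V3 _ _ _ _ (conv_cst 0) xsa Kxs.
- by move=> l x l_ge0 /(V2 _ _ _ l_ge0); rewrite scaler0.
- by move=> x y Kx /(V1 _ _ x); rewrite add0r addrC; exact: trans.
- apply/seteqP; split=> x /=; last by move=> ->; rewrite oppr0; split; exact: refl.
  by move=> [Kx /(V1 _ _ x)]; rewrite add0r addNr => /anti; apply.
Qed.

Section StrictOrdering.
Variable lt : Y -> Y -> Prop.
Hypothesis sY : is_strict_vector_ordering conv le lt.

Lemma lt_subr_gt0 x y : lt x y <-> lt 0 (y - x).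
Proof.
case: sY => _ [_ [_ [S3 _]]]; split=> [/(S3 _ _ (- x)) | /(S3 _ _ x)].
  by rewrite subrr.
by rewrite add0r subrK.
Qed.

Lemma interior_positive_cone : conv_interior conv K = [set x | lt 0 x].
Proof.
case: sY => -[[a [b ab]] _ _ _] [S1 [S2 [S3 [S4 S5]]]].
apply/seteqP; split=> x /=.
- move=> [U [oU UK Ux]].
  have [t t_gt0 Uxt] := conv_open_eventually_subr x (b - a) oU Ux.
  have := S4 _ _ _ t_gt0 (iffLR (lt_subr_gt0 a b) ab); rewrite scaler0.
  by move=> /(S3 _ _ (x - t *: (b - a))); rewrite add0r subrKC; exact/S2/UK.
- move=> x_gt0; exists [set y | lt 0 y]; split=> //; last by move=> y /S1.
  by move=> xs c xsc c_gt0; exact: S5 _ _ _ _ (conv_cst 0) xsc c_gt0.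
Qed.

Lemma positive_cone_solid : is_solid_cone conv K.
Proof.
case: sY => -[[a [b ab]] lt_irr _ _] [S1 _].
have ba_gt0 := iffLR (lt_subr_gt0 a b) ab.
split; first exact: positive_cone_is_cone.
- move=> K0; have : K (b - a) by exact: S1.
  by rewrite K0 /= => ba0; apply: (lt_irr 0); rewrite -{2}ba0.
- by exists (b - a); rewrite interior_positive_cone.
Qed.

End StrictOrdering.

Lemma interior_strict_vector_ordering : is_solid_cone conv K ->
  is_strict_vector_ordering conv le (fun x y => conv_interior conv K (y - x)).
Proof.
case: convY => C1 C2 _; move=> [coneK K_neq0 [a Ia]].
set I := conv_interior conv K.
have I_trans x y z : le x y -> I (z - y) -> I (z - x).
  move=> /le_subr_ge0 Kyx Izy; rewrite -(subrK y z) -addrA.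
  exact: cone_interiorD.
have I_irr x : ~ I (x - x) by rewrite subrr; exact: cone_interior_neq0.
have I_le x y : I (y - x) -> le x y.
  by move=> /conv_interior_sub; exact: (iffRL (le_subr_ge0 x y)).
split; [split|].
- by exists 0, a; rewrite subr0.
- exact: I_irr.
- by move=> x y Iyx /I_le le_yx; exact: I_irr (I_trans _ _ _ le_yx Iyx).
- by move=> x y z /I_le; exact: I_trans.
split; [exact: I_le | split; [exact: I_trans | split; [|split]]].
- by move=> x y z; rewrite opprD addrACA subrr addr0.
- by move=> l x y l_gt0 Iyx; rewrite -scalerBr; exact: cone_interiorZ.
- move=> xs ys c d xsc ysd [U [oU UK Udc]].
  have := C1 _ _ _ _ ysd (C2 _ _ (-1) xsc); rewrite scaleN1r => /oU /(_ Udc).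
  move=> [N UN]; exists N => n leNn; exists U; split=> //.
  by have := UN n leNn; rewrite scaleN1r.
Qed.

End OrderedVectorSpace.
End ConvergenceVectorSpace.

Theorem theorem5p2 (R : realType) (Y : lmodType R)
    (conv : (nat -> Y) -> Y -> Prop) (le : Y -> Y -> Prop) :
  is_convergence conv ->
  is_vector_ordering conv le ->
  let K := [set x : Y | le 0 x] in
  (forall lt : Y -> Y -> Prop,
      is_strict_vector_ordering conv le lt ->
      is_solid_cone conv K /\ conv_interior conv K = [set x | lt 0 x]) /\
  (is_solid_cone conv K ->
      is_strict_vector_ordering conv le (fun x y => conv_interior conv K (y - x)) /\
      (forall lt : Y -> Y -> Prop,
          is_strict_vector_ordering conv le lt ->
          forall x y, lt x y <-> conv_interior conv K (y - x))).
Proof.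
move=> convY ordY K; rewrite {}/K; split.
  move=> lt sY; split; first exact: (positive_cone_solid convY ordY sY).
  exact: (interior_positive_cone convY sY).
move=> solidK; split; first exact: (interior_strict_vector_ordering convY ordY solidK).
move=> lt sY x y; rewrite (interior_positive_cone convY sY) /=.
exact: (lt_subr_gt0 sY x y).
Qed.
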